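(* Let $k$ be a positive integer. Then there exists a polynomial map $f:\mathbb{C}^2\to\mathbb{C}^2$ with $\mu_f=k+1$ such that $\mathbb{C}^2\setminus f(\mathbb{C}^2)$ has at least one isolated point.
   Context: For a dominant polynomial map $f$ (i.e. $f(\mathbb{C}^2)$ dense in $\mathbb{C}^2$), $\mu_f$ is the number of preimages of a generic point of $\mathbb{C}^2$. *)

From HB Require Import structures.
From mathcomp Require Import all_boot all_order all_algebra.
From mathcomp Require Import reals complex.
Set Implicit Arguments. Unset Strict Implicit. Unset Printing Implicit Defensive.
Import Order.TTheory GRing.Theory Num.Theory.
Local Open Scope ring_scope.

(* A bivariate polynomial over C is an element of {poly {poly C}};
   its value at (x, y) is obtained by substituting y for the outer
   variable and x for the inner one. *)
Definition eval2 {C : nzRingType} (p : {poly {poly C}}) (z : C * C) : C :=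
  (p.[z.2%:P]).[z.1].

Definition polymap {C : nzRingType} (P Q : {poly {poly C}}) (z : C * C) : C * C :=
  (eval2 P z, eval2 Q z).

(* Dominant: the image is (Zariski) dense, i.e. the only polynomial
   vanishing on the image is the zero polynomial. *)
Definition dominant {C : nzRingType} (f : C * C -> C * C) : Prop :=
  forall g : {poly {poly C}}, (forall z, eval2 g (f z) = 0) -> g = 0.

Definition fiber_card {C : eqType} (f : C * C -> C * C) (w : C * C) (n : nat) : Prop :=
  exists s : seq (C * C), [/\ uniq s, size s = n & forall z, f z = w <-> z \in s].

(* mu_f = n: a generic point (i.e. every point outside the zero set of some
   nonzero polynomial, a proper Zariski-closed subset) has exactly n preimages. *)
Definition generic_degree {C : nzRingType} (f : C * C -> C * C) (n : nat) : Prop :=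
  exists g : {poly {poly C}}, g != 0 /\
    forall w, eval2 g w != 0 -> fiber_card f w n.

(* w is an isolated point of the set S in C^2 (C with its Euclidean
   topology, product topology on C^2 given by the max of the moduli). *)
Definition isolated_point {C : numDomainType} (S : C * C -> Prop) (w : C * C) : Prop :=
  S w /\ exists e : C, 0 < e /\
    forall z, S z -> `|z.1 - w.1| < e -> `|z.2 - w.2| < e -> z = w.

From mathcomp Require Import all_boot all_order all_algebra all_field.
From mathcomp Require Import reals complex.
From mathcomp Require Import ring.
Set Implicit Arguments. Unset Strict Implicit. Unset Printing Implicit Defensive.
Import Order.TTheory GRing.Theory Num.Theory.
Local Open Scope ring_scope.

(* Take f(x, y) = (xy - 1, x + (xy - 1) y^k).  Over (a, b) with
   c := a (a + 1)^k <> 0, the first coordinate forces y = (a + 1) / x and the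
   second becomes x^k (x - b) + c = 0, so the fibre is in bijection with the
   roots of a polynomial of degree k + 1.  A double root x would satisfy
   (k + 1) x = k b, hence (k + 1)^(k+1) c = k^k b^(k+1); off this curve
   mu_f = k + 1.  The lines a = 0 and a = -1 are covered except at the origin,
   which is not in the image since f(x, y) = (0, 0) forces x = 0 and then
   xy - 1 = -1.  So f(C^2) is C^2 minus one point. *)

Lemma poly_eq0_off_point (C : numDomainType) (p : {poly C}) (c : C) :
  (forall a, a != c -> p.[a] = 0) -> p = 0.
Proof.
move=> p0; apply/eqP; apply: contraT => p_neq0.
pose rs := [seq c + i.+1%:R | i <- iota 0 (size p)].
have := max_poly_roots (rs := rs) p_neq0.
rewrite size_map size_iota ltnn; apply.
- apply/allP => _ /mapP [i _ ->]; apply/eqP/p0.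
  by rewrite -[X in _ != X]addr0 (inj_eq (addrI c)) pnatr_eq0.
- by rewrite map_inj_uniq ?iota_uniq // => i j /addrI /eqP; rewrite eqr_nat eqSS => /eqP.
Qed.

Lemma poly2_eq0_off_point (C : numDomainType) (g : {poly {poly C}}) (w : C * C) :
  (forall z, z != w -> eval2 g z = 0) -> g = 0.
Proof.
move=> g0; apply/polyP => i; rewrite coef0.
apply: (poly_eq0_off_point (c := w.1)) => a a_neq.
have ga0 : map_poly (horner_eval a) g = 0.
  apply: (poly_eq0_off_point (c := 0)) => b _.
  have := horner_map (horner_eval a) g b%:P; rewrite /= /horner_eval hornerC => ->.
  by apply: (g0 (a, b)); apply: contraNneq a_neq => <-; rewrite eqxx.
by have := congr1 (fun q : {poly C} => q`_i) ga0; rewrite coef_map coef0.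
Qed.

Lemma dominant_image_off_point (C : numDomainType) (f : C * C -> C * C) (w : C * C) :
  (forall z, z != w -> exists u, f u = z) -> dominant f.
Proof.
by move=> f_onto g g0; apply: (poly2_eq0_off_point (w := w)) => z /f_onto [u <-].
Qed.

Lemma isolated_point_image_compl (C : numDomainType) (f : C * C -> C * C) (w : C * C) :
  (forall z, (exists u, f u = z) <-> z != w) ->
  isolated_point (fun z => ~ exists u, f u = z) w.
Proof.
move=> img; split; first by move/img; rewrite eqxx.
by exists 1; split=> // z /img /negP /negPn /eqP.
Qed.

Lemma fiber_card_separable (C : closedFieldType) (f : C * C -> C * C) (w : C * C)
    (p : {poly C}) (h : C -> C) :
  separable_poly p -> (forall x y, f (x, y) = w <-> root p x /\ y = h x) ->
  fiber_card f w (size p).-1.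
Proof.
move=> sep_p fiberE; have [rs p_rs] := closed_field_poly_normal p.
have lc_neq0 : lead_coef p != 0 by rewrite lead_coef_eq0 separable_poly_neq0.
exists [seq (x, h x) | x <- rs]; split.
- rewrite map_inj_uniq => [|x y [] //].
  by rewrite -separable_prod_XsubC -(eqp_separable (eqp_scale _ lc_neq0)) -p_rs.
- by rewrite size_map p_rs size_scale // size_prod_XsubC.
- move=> [x y]; rewrite fiberE p_rs rootZ // root_prod_XsubC.
  by split=> [[x_rs ->] | /mapP [r r_rs [-> ->]]]; [exact: map_f | split].
Qed.

Section Example.
Variables (C : numClosedFieldType) (n : nat).
Hypothesis n_gt0 : (0 < n)%N.

Definition fP : {poly {poly C}} := 'X%:P * 'X - 1.
Definition fQ : {poly {poly C}} := 'X%:P + fP * 'X^n.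
Local Notation f := (polymap fP fQ).

Lemma fE x y : f (x, y) = (x * y - 1, x + (x * y - 1) * y ^+ n).
Proof. by rewrite /polymap /eval2 /fQ /fP /= !hornerE. Qed.

Definition fiber_poly (a b : C) : {poly C} :=
  'X^n * ('X - b%:P) + (a * (a + 1) ^+ n)%:P.

Lemma root_fiber_poly a b x :
  root (fiber_poly a b) x = (x ^+ n * (x - b) + a * (a + 1) ^+ n == 0).
Proof. by rewrite /root /fiber_poly !hornerE. Qed.

Lemma size_fiber_poly a b : size (fiber_poly a b) = n.+2.
Proof.
have size_XnXb : size ('X^n * ('X - b%:P)) = n.+2.
  by rewrite size_Mmonic ?monicXsubC ?monic_neq0 ?monicXn // size_polyXn size_XsubC addn2.
by rewrite size_polyDl size_XnXb // ltnS (leq_trans (size_polyC_leq1 _)).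
Qed.

Lemma root_fiber_poly_neq0 a b x : a * (a + 1) ^+ n != 0 ->
  root (fiber_poly a b) x -> x != 0.
Proof.
move=> c_neq0; apply: contraTneq => ->.
by rewrite root_fiber_poly expr0n gtn_eqF // mul0r add0r.
Qed.

Lemma f_fiber a b x y : a * (a + 1) ^+ n != 0 ->
  f (x, y) = (a, b) <-> root (fiber_poly a b) x /\ y = (a + 1) / x.
Proof.
move=> c_neq0; rewrite fE.
have a1_neq0 : a + 1 != 0.
  by apply: contraNneq c_neq0 => ->; rewrite expr0n gtn_eqF // mulr0.
split=> [[ea eb] | [root_x ->]].
  have xy : x * y = a + 1 by rewrite -ea subrK.
  have x_neq0 : x != 0 by apply: contraNneq a1_neq0; rewrite -xy => ->; rewrite mul0r.
  split; last by rewrite -xy mulrC mulKf.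
  by rewrite root_fiber_poly -eb ea -xy exprMn; apply/eqP; ring.
have x_neq0 := root_fiber_poly_neq0 c_neq0 root_x.
rewrite mulrC divfK // addrK; congr (_, _).
apply: (mulIf (expf_neq0 n x_neq0)).
rewrite mulrDl -mulrA -exprMn divfK //.
move: root_x; rewrite root_fiber_poly => /eqP root_x.
by apply/eqP; rewrite -subr_eq0 -root_x; apply/eqP; ring.
Qed.

Lemma f_image z : (exists u, f u = z) <-> z != (0, 0).
Proof.
split=> [[[x y] <-] | ].
  rewrite fE; apply/eqP => -[e1 e2].
  rewrite e1 mul0r addr0 in e2; rewrite e2 mul0r sub0r in e1.
  by move/eqP: e1; rewrite oppr_eq0 oner_eq0.
case: z => a b.
have [-> z_neq0 | a_neq0 _] := eqVneq a 0.
  have b_neq0 : b != 0 by apply: contraNneq z_neq0 => ->.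
  by exists (b, b^-1); rewrite fE divff // subrr mul0r addr0.
have [-> | a_neqN1] := eqVneq a (-1).
  by exists (b, 0); rewrite fE mulr0 expr0n gtn_eqF // mulr0 addr0 sub0r.
have c_neq0 : a * (a + 1) ^+ n != 0 by rewrite mulf_neq0 // expf_neq0 // addr_eq0.
have [x root_x] : exists x, root (fiber_poly a b) x.
  by apply/closed_rootP; rewrite size_fiber_poly.
by exists (x, (a + 1) / x); apply/(f_fiber _ _ _ c_neq0).
Qed.

Lemma separable_fiber_poly a b : a * (a + 1) ^+ n != 0 ->
  (a * (a + 1) ^+ n) *+ (n.+1 ^ n.+1) != b ^+ n.+1 *+ (n ^ n) ->
  separable_poly (fiber_poly a b).
Proof.
move=> c_neq0 disc_neq0; rewrite unlock.
apply: Pdiv.ClosedField.root_coprimep => x root_x; apply/eqP => der_x.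
have x_neq0 := root_fiber_poly_neq0 c_neq0 root_x.
have xn : x ^+ n = x * x ^+ n.-1 by rewrite -exprS prednK.
have crit : x * n.+1%:R = b * n%:R.
  have : x ^+ n.-1 * (x * n.+1%:R - b * n%:R) = 0.
    rewrite -der_x derivD derivC addr0 derivM derivXn derivXsubC !hornerE.
    by rewrite hornerMn hornerXn xn -(mulr_natr (x ^+ n.-1)) -natr1; ring.
  by move/eqP; rewrite mulf_eq0 expf_eq0 (negPf x_neq0) andbF subr_eq0 => /eqP.
have c_eq : a * (a + 1) ^+ n = x ^+ n * (b - x).
  by move: root_x; rewrite root_fiber_poly addrC addr_eq0 => /eqP ->; ring.
apply: (elimN eqP disc_neq0); rewrite c_eq -(mulr_natr (x ^+ n * (b - x))).
rewrite -(mulr_natr (b ^+ n.+1)) !natrX.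
have -> : x ^+ n * (b - x) * n.+1%:R ^+ n.+1 =
    (x * n.+1%:R) ^+ n * (b * n.+1%:R - x * n.+1%:R).
  by rewrite exprMn exprS; ring.
by rewrite crit exprMn exprS -natr1; ring.
Qed.

Definition fiber_disc : {poly {poly C}} :=
  let c := 'X%:P * ('X%:P + 1) ^+ n in
  c * (c *+ (n.+1 ^ n.+1) - 'X ^+ n.+1 *+ (n ^ n)).

Lemma fiber_disc_eval a b : eval2 fiber_disc (a, b) =
  a * (a + 1) ^+ n * ((a * (a + 1) ^+ n) *+ (n.+1 ^ n.+1) - b ^+ n.+1 *+ (n ^ n)).
Proof. by rewrite /eval2 /fiber_disc /= !(hornerE, hornerMn). Qed.

Lemma fiber_disc_neq0 : fiber_disc != 0.
Proof.
apply/eqP => disc0; have := fiber_disc_eval 1 0.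
rewrite disc0 /eval2 !horner0 expr0n /= mul0rn subr0 mul1r => /esym/eqP.
by rewrite mulf_eq0 mulrn_eq0 !expf_eq0 !(pnatr_eq0 C 2) expn_eq0 /= !andbF.
Qed.

Lemma fiber_card_f a b : eval2 fiber_disc (a, b) != 0 -> fiber_card f (a, b) n.+1.
Proof.
rewrite fiber_disc_eval mulf_eq0 negb_or subr_eq0 => /andP [c_neq0 disc_neq0].
rewrite -[n.+1]/(n.+2.-1) -(size_fiber_poly a b).
apply: fiber_card_separable (separable_fiber_poly c_neq0 disc_neq0) _ => x y.
exact: (f_fiber _ _ _ c_neq0).
Qed.

End Example.

Theorem lemma2p7 (R : realType) (k : nat) (hk : (0 < k)%N) :
  exists P Q : {poly {poly R[i]}},
    dominant (polymap P Q) /\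
    generic_degree (polymap P Q) k.+1 /\
    exists w : R[i] * R[i],
      isolated_point (fun z => ~ exists u, polymap P Q u = z) w.
Proof.
exists (fP R[i]), (fQ R[i] k).
have img := f_image (C := R[i]) hk.
split; [|split].
- by apply: (dominant_image_off_point (w := (0, 0))) => z /img.
- exists (fiber_disc R[i] k); split; first exact: fiber_disc_neq0.
  by case=> a b /(fiber_card_f hk).
- by exists (0, 0); apply: isolated_point_image_compl img.
Qed.
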